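(* Let $b_1,b_2,b_3,b_4\in\mathbb C^*$, $B=b_1b_2b_3b_4$, and let $\Lambda\in\mathbb C^*$ with $\Lambda^2\neq B$. Put $\lambda=\Lambda^2/B$, $$F_{\rm eq}=-\frac{B\Lambda(S_1^++2S_1^-\Lambda+S_3^-\Lambda^2)}{(B-\Lambda^2)^2},\quad G_{\rm eq}=-\frac{B\Lambda(S_3^++2S_1^+\Lambda+S_1^-\Lambda^2)}{(B-\Lambda^2)^2},$$ $$\mu=\frac{\Lambda(\Lambda+b_1b_2)(\Lambda+b_1b_3)(\Lambda+b_1b_4)(\Lambda+b_2b_3)(\Lambda+b_2b_4)(\Lambda+b_3b_4)}{(B-\Lambda^2)^4},$$ and for $\phi\in\mathbb C^*$ define $$F(\phi)=\phi+F_{\rm eq}+\mu\phi^{-1},\qquad G(\phi)=\Lambda\phi+G_{\rm eq}+\frac{B}{\Lambda}\mu\phi^{-1}.$$ Then, as identities of rational functions in $\phi$, with $F=F(\phi)$, $G=G(\phi)$, $\bar F=F(\lambda\phi)$, $\bar G=G(\lambda\phi)$: $$(GF-1)(G\bar F-1)=(b_1^{-1}G-1)(b_2^{-1}G-1)(b_3^{-1}G-1)(b_4^{-1}G-1),$$ $$(G\bar F-1)(\bar G\bar F-1)=(b_1\bar F-1)(b_2\bar F-1)(b_3\bar F-1)(b_4\bar F-1).$$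
   Context: $S_i^{\pm}$ denotes the $i$-th elementary symmetric polynomial in $b_1^{\pm1},b_2^{\pm1},b_3^{\pm1},b_4^{\pm1}$, i.e. $(z-b_1^{\pm1})(z-b_2^{\pm1})(z-b_3^{\pm1})(z-b_4^{\pm1})=z^4-S_1^\pm z^3+S_2^\pm z^2-S_3^\pm z+S_4^\pm$. *)

(* complex numbers: an arbitrary numClosedFieldType C (C-like field;
   covers algC); the statement is a purely algebraic identity. *)
From HB Require Import structures.
From mathcomp Require Import all_boot all_order all_algebra all_field.
Set Implicit Arguments. Unset Strict Implicit. Unset Printing Implicit Defensive.
Import GRing.Theory Num.Theory.
Local Open Scope ring_scope.

Definition esym1 {C : numClosedFieldType} (x1 x2 x3 x4 : C) : C := x1 + x2 + x3 + x4.
Definition esym3 {C : numClosedFieldType} (x1 x2 x3 x4 : C) : C :=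
  x1 * x2 * x3 + x1 * x2 * x4 + x1 * x3 * x4 + x2 * x3 * x4.

Definition S1p {C : numClosedFieldType} (b1 b2 b3 b4 : C) := esym1 b1 b2 b3 b4.
Definition S3p {C : numClosedFieldType} (b1 b2 b3 b4 : C) := esym3 b1 b2 b3 b4.
Definition S1m {C : numClosedFieldType} (b1 b2 b3 b4 : C) := esym1 b1^-1 b2^-1 b3^-1 b4^-1.
Definition S3m {C : numClosedFieldType} (b1 b2 b3 b4 : C) := esym3 b1^-1 b2^-1 b3^-1 b4^-1.

Definition Feq {C : numClosedFieldType} (b1 b2 b3 b4 L : C) : C :=
  let B := b1 * b2 * b3 * b4 in
  - (B * L * (S1p b1 b2 b3 b4 + 2 * S1m b1 b2 b3 b4 * L + S3m b1 b2 b3 b4 * L ^+ 2))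
    / (B - L ^+ 2) ^+ 2.

Definition Geq {C : numClosedFieldType} (b1 b2 b3 b4 L : C) : C :=
  let B := b1 * b2 * b3 * b4 in
  - (B * L * (S3p b1 b2 b3 b4 + 2 * S1p b1 b2 b3 b4 * L + S1m b1 b2 b3 b4 * L ^+ 2))
    / (B - L ^+ 2) ^+ 2.

Definition muC {C : numClosedFieldType} (b1 b2 b3 b4 L : C) : C :=
  let B := b1 * b2 * b3 * b4 in
  L * (L + b1 * b2) * (L + b1 * b3) * (L + b1 * b4) * (L + b2 * b3)
    * (L + b2 * b4) * (L + b3 * b4) / (B - L ^+ 2) ^+ 4.

Definition Ffun {C : numClosedFieldType} (b1 b2 b3 b4 L phi : C) : C :=
  phi + Feq b1 b2 b3 b4 L + muC b1 b2 b3 b4 L * phi^-1.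

Definition Gfun {C : numClosedFieldType} (b1 b2 b3 b4 L phi : C) : C :=
  let B := b1 * b2 * b3 * b4 in
  L * phi + Geq b1 b2 b3 b4 L + B / L * muC b1 b2 b3 b4 L * phi^-1.

Definition lambdaC {C : numClosedFieldType} (b1 b2 b3 b4 L : C) : C := L ^+ 2 / (b1 * b2 * b3 * b4).

From HB Require Import structures.
From mathcomp Require Import all_boot all_order all_algebra all_field.
From mathcomp Require Import ring.
Set Implicit Arguments. Unset Strict Implicit. Unset Printing Implicit Defensive.
Import GRing.Theory Num.Theory.
Local Open Scope ring_scope.

(* The involution phi -> mu / (lambda phi) fixes G(phi), F(phi) F(lambda phi) and
   F(phi) + F(lambda phi), so the last two are functions of s = phi + mu / (lambda phi),
   while s = (G - G_eq) / Lambda.  Hence (G F - 1)(G Fbar - 1) = G^2 F Fbar - G (F + Fbar) + 1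
   is a quartic polynomial in G; symmetrically (G Fbar - 1)(Gbar Fbar - 1) is a quartic
   in Fbar, through t = lambda phi + mu / (lambda phi) = Fbar - F_eq.  The values of
   F_eq, G_eq and mu are exactly those making the coefficients of these quartics the
   elementary symmetric functions of the b_i. *)

Definition quarticG {K : fieldType} (L B Fq Gq mu X : K) : K :=
  let lam := L ^+ 2 / B in
  let s := (X - Gq) / L in
  X ^+ 2 * (lam * s ^+ 2 + (1 - lam) ^+ 2 * (mu / lam) + Fq * (1 + lam) * s + Fq ^+ 2)
  - X * ((1 + lam) * s + 2 * Fq) + 1.

Definition quarticF {K : fieldType} (L B Fq Gq mu Y : K) : K :=
  let t := Y - Fq in
  Y ^+ 2 * (B * (t ^+ 2 - 2 * mu) + (L ^+ 2 + B ^+ 2 / L ^+ 2) * mu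
            + Gq * (L + B / L) * t + Gq ^+ 2)
  - Y * ((L + B / L) * t + 2 * Gq) + 1.

Section LaurentPair.
Variables (K : fieldType) (L B Fq Gq mu phi : K).
Hypotheses (hL : L != 0) (hB : B != 0) (hphi : phi != 0).

Let lam := L ^+ 2 / B.
Let F x := x + Fq + mu * x^-1.
Let G x := L * x + Gq + B / L * mu * x^-1.

Let lam_neq0 : lam != 0.
Proof. by rewrite mulf_neq0 ?invr_eq0 ?expf_neq0. Qed.

Lemma prod_GF_quarticG :
  (G phi * F phi - 1) * (G phi * F (lam * phi) - 1)
  = quarticG L B Fq Gq mu (G phi).
Proof.
have hs : (G phi - Gq) / L = phi + mu / (lam * phi).
  by rewrite /G /lam; field; rewrite hphi hL hB.
have hprod : F phi * F (lam * phi) = lam * (phi + mu / (lam * phi)) ^+ 2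
    + (1 - lam) ^+ 2 * (mu / lam) + Fq * (1 + lam) * (phi + mu / (lam * phi)) + Fq ^+ 2.
  by rewrite /F; field; rewrite hphi lam_neq0.
have hsum : F phi + F (lam * phi) = (1 + lam) * (phi + mu / (lam * phi)) + 2 * Fq.
  by rewrite /F; field; rewrite hphi lam_neq0.
rewrite /quarticG -/lam hs -hprod -hsum.
move: (G phi) (F phi) (F (lam * phi)) => g f fb; ring.
Qed.

Lemma prod_GF_quarticF :
  (G phi * F (lam * phi) - 1) * (G (lam * phi) * F (lam * phi) - 1)
  = quarticF L B Fq Gq mu (F (lam * phi)).
Proof.
have ht : F (lam * phi) - Fq = lam * phi + mu / (lam * phi).
  by rewrite /F; field; rewrite hphi lam_neq0.
have hprod : G phi * G (lam * phi) = B * ((lam * phi + mu / (lam * phi)) ^+ 2 - 2 * mu)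
    + (L ^+ 2 + B ^+ 2 / L ^+ 2) * mu + Gq * (L + B / L) * (lam * phi + mu / (lam * phi))
    + Gq ^+ 2.
  by rewrite /G /lam; field; rewrite hphi hL hB.
have hsum : G phi + G (lam * phi) = (L + B / L) * (lam * phi + mu / (lam * phi)) + 2 * Gq.
  by rewrite /G /lam; field; rewrite hphi hL hB.
rewrite /quarticF ht -hprod -hsum.
move: (G phi) (G (lam * phi)) (F (lam * phi)) => g gb fb; ring.
Qed.

End LaurentPair.

(* [L * pair_poly e1 e2 e3 B L] is [prod_(i < j) (L + b_i b_j)] written through the
   elementary symmetric functions e1, e2, e3 and B = e4 of the b_i. *)
Definition pair_poly {K : fieldType} (e1 e2 e3 B L : K) : K :=
  L ^+ 6 + e2 * L ^+ 5 + (e1 * e3 - B) * L ^+ 4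
  + (e1 ^+ 2 * B + e3 ^+ 2 - 2 * e2 * B) * L ^+ 3
  + B * (e1 * e3 - B) * L ^+ 2 + B ^+ 2 * e2 * L + B ^+ 3.

Section QuarticCoefficients.
Variables (K : fieldType) (e1 e2 e3 B L Fq Gq mu : K).
Hypotheses (hB : B != 0) (hL : L != 0) (hD : B - L ^+ 2 != 0).
Hypothesis hFq : Fq = - L * (e1 * B + 2 * e3 * L + e1 * L ^+ 2) / (B - L ^+ 2) ^+ 2.
Hypothesis hGq : Gq = - L * (e3 * B + 2 * e1 * B * L + e3 * L ^+ 2) / (B - L ^+ 2) ^+ 2.
Hypothesis hmu : mu = L * pair_poly e1 e2 e3 B L / (B - L ^+ 2) ^+ 4.

Lemma quarticG_esym X :
  quarticG L B Fq Gq mu X = (X ^+ 4 - e1 * X ^+ 3 + e2 * X ^+ 2 - e3 * X + B) / B.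
Proof. by rewrite /quarticG hFq hGq hmu /pair_poly; field; rewrite hB hL hD. Qed.

Lemma quarticF_esym Y :
  quarticF L B Fq Gq mu Y = B * Y ^+ 4 - e3 * Y ^+ 3 + e2 * Y ^+ 2 - e1 * Y + 1.
Proof. by rewrite /quarticF hFq hGq hmu /pair_poly; field; rewrite hL hD. Qed.

End QuarticCoefficients.

Section FourParameters.
Variables (C : numClosedFieldType) (b1 b2 b3 b4 L : C).
Hypotheses (hb1 : b1 != 0) (hb2 : b2 != 0) (hb3 : b3 != 0) (hb4 : b4 != 0).

Definition esym2 : C := b1 * b2 + b1 * b3 + b1 * b4 + b2 * b3 + b2 * b4 + b3 * b4.

Let B := b1 * b2 * b3 * b4.
Let e1 := esym1 b1 b2 b3 b4.
Let e3 := esym3 b1 b2 b3 b4.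

Lemma Feq_esym : B - L ^+ 2 != 0 ->
  Feq b1 b2 b3 b4 L = - L * (e1 * B + 2 * e3 * L + e1 * L ^+ 2) / (B - L ^+ 2) ^+ 2.
Proof.
move=> hD; rewrite /Feq /S1p /S3p /S1m /S3m /e1 /e3 /B /esym1 /esym3 /=.
by field; rewrite hb1 hb2 hb3 hb4 hD.
Qed.

Lemma Geq_esym : B - L ^+ 2 != 0 ->
  Geq b1 b2 b3 b4 L = - L * (e3 * B + 2 * e1 * B * L + e3 * L ^+ 2) / (B - L ^+ 2) ^+ 2.
Proof.
move=> hD; rewrite /Geq /S1p /S3p /S1m /S3m /e1 /e3 /B /esym1 /esym3 /=.
by field; rewrite hb1 hb2 hb3 hb4 hD.
Qed.

Lemma muC_esym :
  muC b1 b2 b3 b4 L = L * pair_poly e1 esym2 e3 B L / (B - L ^+ 2) ^+ 4.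
Proof.
by rewrite /muC /=; congr (_ / _); rewrite /pair_poly /e1 /e3 /esym1 /esym2 /esym3 /B; ring.
Qed.

Lemma prod_invb_sub1 X :
  (b1^-1 * X - 1) * (b2^-1 * X - 1) * (b3^-1 * X - 1) * (b4^-1 * X - 1)
  = (X ^+ 4 - e1 * X ^+ 3 + esym2 * X ^+ 2 - e3 * X + B) / B.
Proof.
by rewrite /e1 /e3 /esym1 /esym2 /esym3 /B; field; rewrite hb1 hb2 hb3 hb4.
Qed.

Lemma prod_b_sub1 Y :
  (b1 * Y - 1) * (b2 * Y - 1) * (b3 * Y - 1) * (b4 * Y - 1)
  = B * Y ^+ 4 - e3 * Y ^+ 3 + esym2 * Y ^+ 2 - e1 * Y + 1.
Proof. by rewrite /e1 /e3 /esym1 /esym2 /esym3 /B; ring. Qed.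

End FourParameters.

Theorem mainTheorem3 (C : numClosedFieldType) (b1 b2 b3 b4 L : C)
  (hb1 : b1 != 0) (hb2 : b2 != 0) (hb3 : b3 != 0) (hb4 : b4 != 0)
  (hL : L != 0) (hLB : L ^+ 2 != b1 * b2 * b3 * b4) :
  forall phi : C, phi != 0 ->
  let F := Ffun b1 b2 b3 b4 L phi in
  let G := Gfun b1 b2 b3 b4 L phi in
  let Fb := Ffun b1 b2 b3 b4 L (lambdaC b1 b2 b3 b4 L * phi) in
  let Gb := Gfun b1 b2 b3 b4 L (lambdaC b1 b2 b3 b4 L * phi) in
  (G * F - 1) * (G * Fb - 1)
    = (b1^-1 * G - 1) * (b2^-1 * G - 1) * (b3^-1 * G - 1) * (b4^-1 * G - 1)
  /\
  (G * Fb - 1) * (Gb * Fb - 1)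
    = (b1 * Fb - 1) * (b2 * Fb - 1) * (b3 * Fb - 1) * (b4 * Fb - 1).
Proof.
move=> phi hphi F G Fb Gb.
have hB : b1 * b2 * b3 * b4 != 0 by rewrite !mulf_neq0.
have hD : b1 * b2 * b3 * b4 - L ^+ 2 != 0 by rewrite subr_eq0 eq_sym.
have hFq := Feq_esym hb1 hb2 hb3 hb4 hD.
have hGq := Geq_esym hb1 hb2 hb3 hb4 hD.
have hmu := muC_esym b1 b2 b3 b4 L.
rewrite /F /G /Fb /Gb /Ffun /Gfun /lambdaC.
rewrite (prod_GF_quarticG _ _ _ hL hB hphi) (prod_GF_quarticF _ _ _ hL hB hphi).
rewrite (quarticG_esym hB hL hD hFq hGq hmu) (quarticF_esym hL hD hFq hGq hmu).
by rewrite prod_invb_sub1 ?prod_b_sub1.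
Qed.
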